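(* Let $F=\begin{pmatrix}0&-1&0\\-1&4&-1\\0&-1&0\end{pmatrix}$ (edge detect B filter). Then for all $m,n\in\mathbb{N}$, it is not the case that the equation $F*X=B$ with the reflexive boundary condition, for unknown $X\in\mathbb{R}^{m\times n}$, has a unique solution for every $B\in\mathbb{R}^{m\times n}$.
   Context: For $F=[f_{ij}]\in\mathbb{R}^{3\times3}$ and $X=[x_{ij}]\in\mathbb{R}^{m\times n}$, the convolution $F*X\in\mathbb{R}^{m\times n}$ is defined by $[F*X]_{ij}=\sum_{l_1=1}^3\sum_{l_2=1}^3 f_{l_1l_2}\,x_{i-l_1+2,\,j-l_2+2}$ for $1\le i\le m$, $1\le j\le n$, where the reflexive boundary condition sets $x_{0j}=x_{1j}$, $x_{m+1,j}=x_{mj}$, $x_{i0}=x_{i1}$, $x_{i,n+1}=x_{in}$ (for all indices $i\in\{0,\dots,m+1\}$, $j\in\{0,\dots,n+1\}$, so corners are also determined, e.g. $x_{00}=x_{11}$). *)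

From HB Require Import structures.
From mathcomp Require Import all_boot all_order all_algebra.
From mathcomp Require Import reals.
Set Implicit Arguments. Unset Strict Implicit. Unset Printing Implicit Defensive.
Import Order.TTheory GRing.Theory Num.Theory.
Local Open Scope ring_scope.

(* Reflexive boundary: a 1-based extended index k in {0,..,m+1} is mapped to
   the 0-based index of the matrix entry it denotes:
   0 |-> 0 (= x_1), k |-> k-1 for 1 <= k <= m, m+1 |-> m-1 (= x_m). *)
Definition clamp (m k : nat) : nat := (minn (maxn k 1) m).-1.

(* x_{a b} for 1-based extended indices a in {0..m+1}, b in {0..n+1}
   under the reflexive boundary condition (the fallback 0 is never used
   when m, n >= 1). *)
Definition xref {R : pzRingType} {m n : nat} (X : 'M[R]_(m, n)) (a b : nat) : R :=
  match @insub nat (fun k => (k < m)%N) 'I_m (clamp m a),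
        @insub nat (fun k => (k < n)%N) 'I_n (clamp n b) with
  | Some i, Some j => X i j
  | _, _ => 0
  end.

(* [F*X]_{ij} = sum_{l1,l2=1}^3 f_{l1 l2} x_{i-l1+2, j-l2+2}.
   With 0-based i : 'I_m (1-based i+1) and 0-based l1 : 'I_3 (1-based l1+1),
   the 1-based extended row index is (i+1)-(l1+1)+2 = i+2-l1. *)
Definition conv {R : pzRingType} {m n : nat} (F : 'M[R]_3) (X : 'M[R]_(m, n))
  : 'M[R]_(m, n) :=
  \matrix_(i < m, j < n)
     \sum_(l1 < 3) \sum_(l2 < 3) F l1 l2 * xref X (i + 2 - l1)%N (j + 2 - l2)%N.

Definition edgeB {R : pzRingType} : 'M[R]_3 :=
  \matrix_(i < 3, j < 3)
     (if (i == 1 :> nat) && (j == 1 :> nat) then 4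
      else if (i == 1 :> nat) || (j == 1 :> nat) then -1 else 0).

From HB Require Import structures.
From mathcomp Require Import all_boot all_order all_algebra.
From mathcomp Require Import reals.
Import Order.TTheory GRing.Theory Num.Theory.
Local Open Scope ring_scope.

(* The entries of [edgeB] sum to zero, so under the reflexive boundary
   condition every constant image is mapped to zero: the convolution has a
   nontrivial kernel and hence is not injective. *)

Lemma not_uniquely_solvable_of_collision (A B : Type) (f : A -> B) (x y : A) :
  f x = f y -> x <> y -> ~ (forall b, exists! a, f a = b).
Proof.
move=> fxy neq_xy solvable; have [a [_ a_uniq]] := solvable (f y).
by apply: neq_xy; rewrite -(a_uniq x fxy) (a_uniq y).
Qed.

Lemma clamp_lt (m k : nat) : (0 < m)%N -> (clamp m k < m)%N.
Proof.
move=> m_gt0; rewrite /clamp.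
have clamp_gt0 : (0 < minn (maxn k 1) m)%N.
  by rewrite leq_min m_gt0 andbT leq_max ltnSn orbT.
by rewrite prednK // geq_minr.
Qed.

Section ConstantImage.
Variables (R : pzRingType) (m n : nat).
Hypotheses (m_gt0 : (0 < m)%N) (n_gt0 : (0 < n)%N).

Lemma xref_const_mx (c : R) (a b : nat) : xref (const_mx c : 'M[R]_(m, n)) a b = c.
Proof.
rewrite /xref; case: insubP => [i _ _|]; last by rewrite clamp_lt.
by case: insubP => [j _ _|]; rewrite ?mxE ?clamp_lt.
Qed.

Lemma conv_const_mx (F : 'M[R]_3) (c : R) :
  conv F (const_mx c : 'M[R]_(m, n)) =
  const_mx ((\sum_(l1 < 3) \sum_(l2 < 3) F l1 l2) * c).
Proof.
apply/matrixP => i j; rewrite !mxE mulr_suml.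
by apply: eq_bigr => l1 _; rewrite mulr_suml; apply: eq_bigr => l2 _; rewrite xref_const_mx.
Qed.

Lemma const_mx1_neq0 (S : nzRingType) : (const_mx 1 : 'M[S]_(m, n)) != 0.
Proof.
by apply/eqP => /matrixP /(_ (Ordinal m_gt0) (Ordinal n_gt0)) /eqP; rewrite !mxE oner_eq0.
Qed.

End ConstantImage.

Lemma edgeB_sum (R : pzRingType) : \sum_(l1 < 3) \sum_(l2 < 3) (edgeB : 'M[R]_3) l1 l2 = 0.
Proof.
rewrite !big_ord_recr !big_ord0 /= !mxE /= !(addr0, add0r).
rewrite -[4 : R]/(1 *+ 4) !mulrS mulr0n addr0 !addrA.
by rewrite addrNK addNr add0r addrK subrr.
Qed.

Theorem corollary12 (R : realType) (m n : nat) (hm : (0 < m)%N) (hn : (0 < n)%N) :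
  ~ (forall B : 'M[R]_(m, n), exists! X : 'M[R]_(m, n), conv edgeB X = B).
Proof.
apply: (@not_uniquely_solvable_of_collision _ _ _ (const_mx 1) (const_mx 0)).
  by rewrite !conv_const_mx // edgeB_sum !mul0r.
exact/eqP/const_mx1_neq0.
Qed.
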